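(* Let $E$ be a Banach lattice, $F\subseteq E$ a norm-closed, order dense ideal of $E$, and $T\in Z(E)$. Let $T_F$ denote the restriction of $T$ to $F$ (an operator on $F$). Then $\|T_F\|=\|T\|$.
   Context: $Z(E)=\{T\in\mathcal L(E):|T|\le\lambda I\text{ for some }\lambda\}$ is the center of $E$; elements of $Z(E)$ are band preserving, so $T$ maps $F$ into $F$. *)

From HB Require Import structures.
From mathcomp Require Import all_boot all_order all_algebra.
From mathcomp Require Import all_classical all_reals all_analysis.
Set Implicit Arguments. Unset Strict Implicit. Unset Printing Implicit Defensive.
Import Order.TTheory GRing.Theory Num.Theory.
Import numFieldNormedType.Exports.
Local Open Scope classical_set_scope.
Local Open Scope ring_scope.

Definition vector_lattice {R : realType} {E : lmodType R}
  (le : E -> E -> Prop) (join : E -> E -> E) : Prop :=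
  [/\ (forall x, le x x),
      (forall x y, le x y -> le y x -> x = y),
      (forall x y z, le x y -> le y z -> le x z),
      (forall x y z, le x y -> le (x + z) (y + z)) &
      ((forall (a : R) x y, 0 <= a -> le x y -> le (a *: x) (a *: y)) /\
      (forall x y, le x (join x y) /\ le y (join x y) /\
                   forall z, le x z -> le y z -> le (join x y) z))].

Definition vabs {R : realType} {E : lmodType R} (join : E -> E -> E) (x : E) : E :=
  join x (- x).

Definition lattice_norm {R : realType} {E : normedModType R}
  (le : E -> E -> Prop) (join : E -> E -> E) : Prop :=
  forall x y : E, le (vabs join x) (vabs join y) -> `|x| <= `|y|.

Definition banach_lattice {R : realType} {E : completeNormedModType R}
  (le : E -> E -> Prop) (join : E -> E -> E) : Prop :=
  vector_lattice le join /\ lattice_norm le join.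

Definition is_ideal {R : realType} {E : lmodType R}
  (le : E -> E -> Prop) (join : E -> E -> E) (F : set E) : Prop :=
  [/\ F 0,
      (forall x y, F x -> F y -> F (x + y)),
      (forall (a : R) x, F x -> F (a *: x)) &
      (forall x y, F y -> le (vabs join x) (vabs join y) -> F x)].

Definition order_dense {R : realType} {E : lmodType R}
  (le : E -> E -> Prop) (F : set E) : Prop :=
  forall x, le 0 x -> x <> 0 -> exists y, [/\ F y, le 0 y, y <> 0 & le y x].

(* T in the center Z(E): T bounded linear with -lam I <= T <= lam I in the
   order of operators, i.e. |T| <= lam I. *)
Definition in_center {R : realType} {E : normedModType R}
  (le : E -> E -> Prop) (T : {linear E -> E}) : Prop :=
  continuous T /\
  exists lam : R, forall x, le 0 x -> le (- (lam *: x)) (T x) /\ le (T x) (lam *: x).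

Definition opnorm_on {R : realType} {E : normedModType R}
  (A : set E) (T : E -> E) : R :=
  sup [set `|T x| | x in [set x | A x /\ `|x| <= 1]].

From HB Require Import structures.
From mathcomp Require Import all_boot all_order all_algebra.
From mathcomp Require Import all_classical all_reals all_analysis.
From mathcomp Require Import lra.
Import Order.TTheory GRing.Theory Num.Theory.
Import archimedean.Num.Theory archimedean.Num.Def.
Import numFieldNormedType.Exports.
Local Open Scope classical_set_scope.
Local Open Scope ring_scope.

Set Implicit Arguments.
Unset Strict Implicit.

(* Let [c] be the norm of [T] on [F], and [-L x <= T x <= L x] for [x >= 0].
   It suffices to show [-c x <= T x <= c x] for [x >= 0]: the lattice norm then
   gives [`|T x| <= c * `|x|]. For [d > c], [phi = (T + L) / (d + L)] is a
   positive operator bounded by a multiple of the identity, with norm [< 1] on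
   [F]. The partial sums of its Neumann series keep [(x - phi x)^+] and
   [(x - phi x)^-] disjoint, which yields [(phi x - x)^+ <= phi^(N+1) x --> 0],
   i.e. [T x <= d x] for [x] in [F]. Order density and the Archimedean property
   transfer this to all [x >= 0], and then [d] tends to [c]. *)

Lemma morphDB (U V : zmodType) (f : U -> V) :
  {morph f : u v / u + v} -> {morph f : u v / u - v}.
Proof. by move=> fD u v; apply: (addIr (f v)); rewrite -fD !subrK. Qed.

Section VectorLattice.
Variables (R : realType) (E : lmodType R) (le : E -> E -> Prop) (join : E -> E -> E).
Hypothesis hVL : vector_lattice le join.

Lemma vle_refl x : le x x. Proof. by case: hVL. Qed.
Lemma vle_anti x y : le x y -> le y x -> x = y. Proof. by case: hVL => _ + _ _ _; apply. Qed.
Lemma vle_trans x y z : le x y -> le y z -> le x z.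
Proof. by case: hVL => _ _ + _ _; apply. Qed.
Lemma vleD2r x y z : le x y -> le (x + z) (y + z).
Proof. by case: hVL => _ _ _ + _; apply. Qed.
Lemma vleZ a x y : 0 <= a -> le x y -> le (a *: x) (a *: y).
Proof. by case: hVL => _ _ _ _ [+ _]; apply. Qed.
Lemma vleUl x y : le x (join x y). Proof. by case: hVL => _ _ _ _ [_ /(_ x y) []]. Qed.
Lemma vleUr x y : le y (join x y). Proof. by case: hVL => _ _ _ _ [_ /(_ x y) [_ []]]. Qed.
Lemma vleUx x y z : le x z -> le y z -> le (join x y) z.
Proof. by case: hVL => _ _ _ _ [_ /(_ x y) [_ [_]]]; apply. Qed.

Lemma vleD2l x y z : le x y -> le (z + x) (z + y).
Proof. by move=> h; rewrite ![z + _]addrC; apply: vleD2r. Qed.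

Lemma vleD a b c d : le a b -> le c d -> le (a + c) (b + d).
Proof. by move=> h1 h2; apply: vle_trans (vleD2r c h1) (vleD2l b h2). Qed.

Lemma vsubr_ge0 x y : le 0 (y - x) <-> le x y.
Proof.
split=> h; first by have := vleD2r x h; rewrite add0r subrK.
by have := vleD2r (- x) h; rewrite subrr.
Qed.

Lemma vleN x y : le x y -> le (- y) (- x).
Proof. by move=> /vsubr_ge0 h; apply/vsubr_ge0; rewrite opprK addrC. Qed.

Lemma vleNr x y : le (- x) y <-> le (- y) x.
Proof. by split=> /vleN; rewrite opprK. Qed.

Lemma vscale_ge0 a x : 0 <= a -> le 0 x -> le 0 (a *: x).
Proof. by move=> a0 /(vleZ a0); rewrite scaler0. Qed.

Lemma vleZ2r a b x : a <= b -> le 0 x -> le (a *: x) (b *: x).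
Proof.
by move=> ab x0; apply/vsubr_ge0; rewrite -scalerBl; apply: vscale_ge0; rewrite ?subr_ge0.
Qed.

Lemma vjoinC x y : join x y = join y x.
Proof.
by apply: vle_anti; apply: vleUx; [apply: vleUr|apply: vleUl|apply: vleUr|apply: vleUl].
Qed.

Lemma vjoinDr a b c : join (a + c) (b + c) = join a b + c.
Proof.
apply: vle_anti; first by apply: vleUx; apply: vleD2r; [apply: vleUl|apply: vleUr].
have h : le (join a b) (join (a + c) (b + c) - c).
  by apply: vleUx; rewrite -[X in le X _](addrK c); apply: vleD2r; [apply: vleUl|apply: vleUr].
by have := vleD2r c h; rewrite subrK.
Qed.

Lemma vjoinZ t a b : 0 <= t -> join (t *: a) (t *: b) = t *: join a b.
Proof.
rewrite le_eqVlt => /orP [/eqP <-|t0]; first by rewrite !scale0r; apply: vle_anti;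
  [apply: vleUx; apply: vle_refl|apply: vleUl].
apply: vle_anti; first by apply: vleUx; apply: vleZ (ltW t0) _; [apply: vleUl|apply: vleUr].
have tV0 : 0 <= t^-1 by rewrite invr_ge0 ltW.
rewrite -[X in le _ X](scalerKV (lt0r_neq0 t0)); apply: vleZ (ltW t0) _.
by apply: vleUx; rewrite -[X in le X _](scalerK (lt0r_neq0 t0)); apply: vleZ tV0 _;
  [apply: vleUl|apply: vleUr].
Qed.

Definition vmeet a b := - join (- a) (- b).

Lemma vleIl a b : le (vmeet a b) a.
Proof. by rewrite /vmeet; apply/vleNr; apply: vleUl. Qed.
Lemma vleIr a b : le (vmeet a b) b.
Proof. by rewrite /vmeet; apply/vleNr; apply: vleUr. Qed.
Lemma vlexI c a b : le c a -> le c b -> le c (vmeet a b).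
Proof. by move=> /vleN h1 /vleN h2; have := vleN (vleUx h1 h2); rewrite opprK. Qed.

Lemma vmeetC a b : vmeet a b = vmeet b a.
Proof. by rewrite /vmeet vjoinC. Qed.

Lemma vmeet_le a b c d : le a c -> le b d -> le (vmeet a b) (vmeet c d).
Proof.
move=> h1 h2.
by apply: vlexI; [apply: vle_trans (vleIl _ _) h1|apply: vle_trans (vleIr _ _) h2].
Qed.

Lemma vmeetZ t a b : 0 <= t -> vmeet (t *: a) (t *: b) = t *: vmeet a b.
Proof. by move=> t0; rewrite /vmeet -!scalerN vjoinZ // scalerN. Qed.

Lemma vmeetDr a b c : vmeet (a + c) (b + c) = vmeet a b + c.
Proof. by rewrite /vmeet !opprD vjoinDr opprD opprK. Qed.

Definition ppart z := join z 0.
Definition npart z := join (- z) 0.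

Lemma ppart_ge0 z : le 0 (ppart z). Proof. exact: vleUr. Qed.
Lemma npart_ge0 z : le 0 (npart z). Proof. exact: vleUr. Qed.

Lemma ppartE z : ppart z = npart z + z.
Proof. by rewrite /npart -vjoinDr addNr add0r vjoinC. Qed.

Lemma ppart_sub_npart z : ppart z - npart z = z.
Proof. by rewrite ppartE addrC addKr. Qed.

Lemma vmeet_ppart_npart z : vmeet (ppart z) (npart z) = 0.
Proof. by rewrite ppartE addrC -[X in vmeet _ X]add0r vmeetDr /vmeet oppr0 addNr. Qed.

Lemma subr_vmeet a b : a - vmeet a b = ppart (a - b).
Proof. by rewrite /vmeet opprK addrC -vjoinDr addNr [- b + a]addrC vjoinC. Qed.

Lemma ppart_le0 z : ppart z = 0 -> le z 0.
Proof. by move=> <-; apply: vleUl. Qed.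

Lemma vabs_ge0 z : le 0 (vabs join z).
Proof.
have := vleD (vleUl z (- z)) (vleUr z (- z)); rewrite subrr -mulr2n -scaler_nat => h.
have half0 : 0 <= 2^-1 :> R by rewrite invr_ge0.
by have := vleZ half0 h; rewrite scaler0 scalerA mulVf ?scale1r.
Qed.

Lemma vabs_id w : le 0 w -> vabs join w = w.
Proof.
move=> w0; apply: vle_anti; last exact: vleUl.
have := vleN w0; rewrite oppr0 => Nw0.
by apply: vleUx; [apply: vle_refl|apply: vle_trans Nw0 w0].
Qed.

Lemma vabsZ t z : 0 <= t -> vabs join (t *: z) = t *: vabs join z.
Proof. by move=> t0; rewrite /vabs -scalerN vjoinZ. Qed.

Lemma ppart_add_npart_le z : le (ppart z + npart z) (vabs join z).
Proof.
rewrite {1}/ppart -vjoinDr add0r /npart addrC -vjoinDr addNr add0r.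
apply: vleUx; apply: vleUx; try exact: vabs_ge0; [exact: vleUl|exact: vleUr].
Qed.

Lemma vmeet_eq0_le_scale a b a' b' s t : 0 <= s -> 0 <= t ->
  le 0 a -> le 0 b -> le 0 a' -> le 0 b' -> le a' (s *: a) -> le b' (t *: b) ->
  vmeet a b = 0 -> vmeet a' b' = 0.
Proof.
move=> s0 t0 a0 b0 a'0 b'0 ha hb ab0; apply: vle_anti; last exact: vlexI.
have st0 : 0 <= s + t by rewrite addr_ge0.
have hs : s <= s + t by rewrite lerDl.
have ht : t <= s + t by rewrite lerDr.
apply: vle_trans (vmeet_le (vle_trans ha (vleZ2r hs a0)) (vle_trans hb (vleZ2r ht b0))) _.
by rewrite vmeetZ // ab0 scaler0; apply: vle_refl.
Qed.

Lemma le_of_vmeet_eq0 a b c : le 0 c -> le a (b + c) -> vmeet a b = 0 -> le a c.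
Proof.
move=> c0 h ab0; apply: vle_trans (vlexI (vle_refl a) h) _.
rewrite -[X in vmeet X _](subrK c) vmeetDr.
have hac : le (a - c) a by apply/vsubr_ge0; rewrite opprB addrC subrK.
apply: vle_trans (vleD2r c (vmeet_le hac (vle_refl b))) _.
by rewrite ab0 add0r; apply: vle_refl.
Qed.

Lemma vsubr_le0 x y : le (x - y) 0 <-> le x y.
Proof.
split=> h; first by have := vleD2r y h; rewrite subrK add0r.
by have := vleD2r (- y) h; rewrite subrr.
Qed.

Definition pos_bounded (phi : E -> E) (M : R) :=
  forall u, le 0 u -> le 0 (phi u) /\ le (phi u) (M *: u).

Definition abs_bounded (S : E -> E) (L : R) :=
  forall u, le 0 u -> le (- (L *: u)) (S u) /\ le (S u) (L *: u).

Definition archimedean_lattice :=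
  forall x y, le 0 y -> (forall n : nat, le (n%:R *: y) x) -> y = 0.

Lemma ideal_le_ge0 F x y : is_ideal le join F -> F y -> le 0 x -> le x y -> F x.
Proof.
by case=> _ _ _ Fsol Fy x0 xy; apply: (Fsol x y Fy); rewrite !vabs_id //; apply: vle_trans xy.
Qed.

Lemma order_dense_eq0 F p : order_dense le F -> le 0 p ->
  (forall y, F y -> le 0 y -> le y p -> y = 0) -> p = 0.
Proof.
move=> hFd p0 hp; have [//|pn0] := pselect (p = 0).
by have [y [Fy y0 + yp]] := hFd p p0 pn0; have := hp y Fy y0 yp.
Qed.

Lemma abs_boundedW S a b : a <= b -> abs_bounded S a -> abs_bounded S b.
Proof.
move=> ab hS u u0; have [h1 h2] := hS u u0; have hab := vleZ2r ab u0.
by split; [apply: vle_trans (vleN hab) h1|apply: vle_trans h2 hab].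
Qed.

Lemma abs_boundedN S L : abs_bounded S L -> abs_bounded (fun x => - S x) L.
Proof. by move=> hS u /hS [h1 h2]; split; [apply: vleN|apply/vleNr]. Qed.

Lemma vabs_le_scale S c : {morph S : u v / u + v} -> 0 <= c -> abs_bounded S c ->
  forall x, le (vabs join (S x)) (c *: vabs join x).
Proof.
move=> SD c0 hS x.
have SB := morphDB SD.
have eSx : S x = S (ppart x) - S (npart x) by rewrite -SB ppart_sub_npart.
have [p1 p2] := hS _ (ppart_ge0 x); have [n1 n2] := hS _ (npart_ge0 x).
have hc := vleZ c0 (ppart_add_npart_le x); rewrite scalerDr in hc.
apply: vleUx; apply: vle_trans hc; rewrite eSx.
- by apply: (vleD p2); apply/vleNr.
- by rewrite opprB [c *: ppart x + _]addrC; apply: (vleD n2); apply/vleNr.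
Qed.

Lemma archimedean_le_scale v x : archimedean_lattice -> le 0 v ->
  (forall e, 0 < e -> le v (e *: x)) -> v = 0.
Proof.
move=> harch v0 hv; apply: (harch x v v0) => -[|n].
  by rewrite scale0r; have := hv 1 ltr01; rewrite scale1r; apply: vle_trans.
have n0 : 0 < n.+1%:R :> R by rewrite ltr0Sn.
have nV0 : 0 < n.+1%:R^-1 :> R by rewrite invr_gt0.
have := vleZ (ltW n0) (hv _ nV0).
by rewrite scalerA mulfV ?scale1r // lt0r_neq0.
Qed.

Lemma le_scale_of_gt S c x : archimedean_lattice -> le 0 x ->
  (forall d, c < d -> le (S x) (d *: x)) -> le (S x) (c *: x).
Proof.
move=> harch x0 hd; apply/vsubr_le0/ppart_le0.
apply: (archimedean_le_scale harch (ppart_ge0 _)) => e e0.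
apply: vleUx; last exact: vscale_ge0 (ltW e0) x0.
have := hd (c + e); rewrite ltrDl scalerDl => /(_ e0) h.
by apply/vsubr_le0; rewrite -addrA -opprD; apply/vsubr_le0.
Qed.

Section Neumann.
Variables (phi : E -> E) (M : R).
Hypotheses (phiD : {morph phi : u v / u + v}) (M0 : 0 <= M) (hphi : pos_bounded phi M).

(* Partial sums of the Neumann series of [(1 - phi)^-1], in Horner form. *)
Fixpoint neumann N v := if N is N'.+1 then v + phi (neumann N' v) else v.

Lemma neumannD N : {morph neumann N : u v / u + v}.
Proof. by elim: N => [//|N IH] u v /=; rewrite IH phiD addrACA. Qed.

Lemma neumann_telescope N v : neumann N (v - phi v) = v - iter N.+1 phi v.
Proof. by elim: N => [//|N IH]; rewrite [LHS]/= IH (morphDB phiD) addrA subrK. Qed.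

Lemma iter_ge0 n u : le 0 u -> le 0 (iter n phi u).
Proof. by move=> u0; elim: n => [//|n IH]; exact: (hphi IH).1. Qed.

Lemma neumann_bounds N u : le 0 u ->
  le u (neumann N u) /\ le (neumann N u) ((1 + M) ^+ N *: u).
Proof.
move=> u0; elim: N => [|N [lb ub]] /=.
  by rewrite expr0 scale1r; split; apply: vle_refl.
have [p0 pM] := hphi (vle_trans u0 lb).
split; first by have := vleD2l u p0; rewrite addr0.
have uC : le u ((1 + M) ^+ N *: u).
  by rewrite -[X in le X _]scale1r; apply: vleZ2r u0; rewrite exprn_ege1 // lerDl.
have pC : le (phi (neumann N u)) ((M * (1 + M) ^+ N) *: u).
  by apply: vle_trans pM _; rewrite -scalerA; apply: vleZ M0 ub.
by rewrite exprS mulrDl mul1r scalerDl; apply: vleD uC pC.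
Qed.

Lemma ppart_sub_le_iter x N : le 0 x -> le (ppart (phi x - x)) (iter N.+1 phi x).
Proof.
move=> x0; set w := x - phi x.
have -> : ppart (phi x - x) = npart w by rewrite /npart /w opprB.
have C0 : 0 <= (1 + M) ^+ N by rewrite exprn_ge0 // addr_ge0.
have [lbp ubp] := neumann_bounds N (ppart_ge0 w).
have [lbn ubn] := neumann_bounds N (npart_ge0 w).
(* [neumann N] is dominated by a multiple of the identity, so it keeps the
   positive and negative parts of [w] disjoint. *)
have disj : vmeet (neumann N (npart w)) (neumann N (ppart w)) = 0.
  apply: (vmeet_eq0_le_scale C0 C0 (npart_ge0 w) (ppart_ge0 w) _ _ ubn ubp).
  - exact: vle_trans (npart_ge0 w) lbn.
  - exact: vle_trans (ppart_ge0 w) lbp.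
  - by rewrite vmeetC vmeet_ppart_npart.
have hsum : le (neumann N (npart w)) (neumann N (ppart w) + iter N.+1 phi x).
  apply/vsubr_ge0.
  by rewrite addrAC -(morphDB (neumannD N)) ppart_sub_npart neumann_telescope subrK.
exact: vle_trans lbn (le_of_vmeet_eq0 (iter_ge0 _ x0) hsum disj).
Qed.

End Neumann.

Section DenseIdeal.
Variables (S : E -> E) (L d : R) (F : set E).
Hypotheses (harch : archimedean_lattice) (SD : {morph S : u v / u + v}) (L0 : 0 <= L)
  (hSL : forall u, le 0 u -> le (S u) (L *: u))
  (hF : is_ideal le join F) (hFd : order_dense le F)
  (d0 : 0 <= d) (hSF : forall z, F z -> le 0 z -> le (S z) (d *: z)).

Lemma le_scale_of_dense_ideal x : le 0 x -> le (S x) (d *: x).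
Proof.
(* An element [y] of [F] below [(S x - d x)^+] satisfies [m y <= x] for all [m],
   because [S <= d] on [vmeet x (m y)], which lies in [F]. *)
move=> x0; apply/vsubr_le0/ppart_le0.
apply: (order_dense_eq0 hFd (ppart_ge0 _)) => y Fy y0 yp.
apply: (@harch x y y0) => n; set m : R := n%:R.
have m0 : 0 <= m by rewrite ler0n.
have my0 := vscale_ge0 m0 y0.
set z := vmeet x (m *: y); set r := ppart (x - m *: y); set q := npart (x - m *: y).
have z0 : le 0 z := vlexI x0 my0.
have Fz : F z by case: hF => _ _ FZ _; apply: ideal_le_ge0 hF (FZ m y Fy) z0 (vleIr _ _).
have exz : x = z + r by rewrite /r -subr_vmeet addrC subrK.
have r0 : le 0 r := ppart_ge0 _.
have hxr : le (S x - d *: x) (L *: r).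
  have Sr : le (S r - d *: r) (L *: r).
    apply: vle_trans (hSL r0); apply/vsubr_ge0.
    by rewrite opprB addrC subrK; apply: vscale_ge0.
  rewrite {1 2}exz SD scalerDr opprD addrACA.
  by rewrite -[X in le _ X]add0r; apply: vleD Sr; apply/vsubr_le0; apply: hSF.
have yr : le y (L *: r) := vle_trans yp (vleUx hxr (vscale_ge0 L0 r0)).
have hyq : vmeet (m *: y) q = 0.
  apply: (vmeet_eq0_le_scale (mulr_ge0 m0 L0) ler01 r0 (npart_ge0 _) my0 (npart_ge0 _)).
  - by rewrite -scalerA; apply: vleZ m0 yr.
  - by rewrite scale1r; apply: vle_refl.
  - exact: vmeet_ppart_npart.
apply: le_of_vmeet_eq0 x0 _ hyq; apply/vsubr_ge0.
by rewrite -addrA -(ppart_sub_npart (x - m *: y)) -/r -/q addrC subrK.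
Qed.

End DenseIdeal.

End VectorLattice.

Section NormedVectorLattice.
Variables (R : realType) (E : normedModType R) (le : E -> E -> Prop) (join : E -> E -> E).
Hypotheses (hVL : vector_lattice le join) (hLN : lattice_norm le join).

Lemma vnorm_le u w : le 0 u -> le u w -> `|u| <= `|w|.
Proof.
move=> u0 uw; have w0 := vle_trans hVL u0 uw.
by apply: hLN; rewrite !(vabs_id hVL).
Qed.

Lemma lattice_norm_archimedean : archimedean_lattice le.
Proof.
move=> x y y0 hy; apply/normr0_eq0/eqP; rewrite eq_le normr_ge0 andbT leNgt.
apply/negP => ny0; set n := (truncn (`|x| / `|y|)).+1.
have := vnorm_le (vscale_ge0 hVL (ler0n R n) y0) (hy n).
rewrite normrZ ger0_norm // -ler_pdivlMr // leNgt.
by rewrite truncnS_gt.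
Qed.

Lemma norm_le_scale S c : {morph S : u v / u + v} -> 0 <= c -> abs_bounded le S c ->
  forall x, `|S x| <= c * `|x|.
Proof.
move=> SD c0 hS x; rewrite -[c in c * _]ger0_norm // -normrZ.
by apply: hLN; rewrite (vabsZ hVL) //; apply: (vabs_le_scale hVL SD c0 hS x).
Qed.

Lemma le_of_iter_cvg0 phi M x : {morph phi : u v / u + v} -> 0 <= M -> pos_bounded le phi M ->
  le 0 x -> iter n phi x @[n --> \oo] --> 0 -> le (phi x) x.
Proof.
move=> phiD M0 hphi x0 hcvg; apply/(vsubr_le0 hVL)/(ppart_le0 hVL).
apply/normr0_eq0/eqP; rewrite eq_le normr_ge0 andbT; apply/ler_addgt0Pr => e e0.
have [N _ HN] := cvgr0_norm_le _ hcvg _ e0.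
rewrite add0r; apply: le_trans (HN N.+1 (leqnSn N)).
exact: vnorm_le (ppart_ge0 hVL _) (ppart_sub_le_iter hVL phiD M0 hphi N x0).
Qed.

Lemma iter_cvg0_on_ideal phi M r F : 0 <= M -> pos_bounded le phi M ->
  is_ideal le join F -> 0 <= r -> r < 1 -> (forall w, F w -> `|phi w| <= r * `|w|) ->
  forall z, F z -> le 0 z -> iter n phi z @[n --> \oo] --> 0.
Proof.
move=> M0 hphi hF r0 r1 hr z Fz z0.
have [_ _ FZ _] := hF.
have iterF n : [/\ F (iter n phi z), le 0 (iter n phi z) & `|iter n phi z| <= r ^+ n * `|z|].
  elim: n => [|n [Fn n0 bn]]; first by rewrite expr0 mul1r.
  have [p0 pM] := hphi _ n0; split => //=.
    exact: (ideal_le_ge0 hVL hF (FZ M _ Fn) p0 pM).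
  by apply: le_trans (hr _ Fn) _; rewrite exprS -mulrA ler_wpM2l.
apply: norm_cvg0; apply: (@squeeze_cvgr _ _ _ _ (cst 0) (geometric `|z| r)).
- by apply: nearW => n; rewrite normr_ge0 /= mulrC; have [_ _] := iterF n.
- exact: cvg_cst.
- by apply: cvg_geometric; rewrite ger0_norm.
Qed.

Lemma le_scale_on_ideal S L c d F :
  {morph S : u v / u + v} -> 0 <= L -> abs_bounded le S L -> is_ideal le join F ->
  0 <= c -> (forall z, F z -> `|S z| <= c * `|z|) -> c < d ->
  forall z, F z -> le 0 z -> le (S z) (d *: z).
Proof.
move=> SD L0 hSL hF c0 hc cd z Fz z0.
set mu := d + L.
have mu0 : 0 < mu by rewrite /mu; lra.
have muV0 : 0 <= mu^-1 by rewrite invr_ge0 ltW.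
(* Shifting by [L] makes the operator positive; on [F] the normalised [phi] has
   norm at most [r < 1], so its orbits tend to [0]. *)
pose phi v := mu^-1 *: (S v + L *: v).
have phiD : {morph phi : u v / u + v}.
  by move=> u v; rewrite /phi SD [L *: (u + v)]scalerDr addrACA scalerDr.
set M := mu^-1 * (L + L).
have M0 : 0 <= M by rewrite mulr_ge0 ?addr_ge0.
have hphi : pos_bounded le phi M.
  move=> u u0; have [h1 h2] := hSL u u0; split.
    by apply: (vscale_ge0 hVL muV0); have := vleD2r hVL (L *: u) h1; rewrite addNr.
  by rewrite /M -scalerA; apply: (vleZ hVL muV0); rewrite scalerDl; apply: (vleD2r hVL).
set r := (c + L) / mu.
have r0 : 0 <= r by apply: divr_ge0; [apply: addr_ge0|apply: ltW].
have r1 : r < 1 by rewrite ltr_pdivrMr // mul1r /mu ltrD2r.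
have phi_r w : F w -> `|phi w| <= r * `|w|.
  move=> Fw; rewrite /phi normrZ ger0_norm // /r mulrAC [_ * mu^-1]mulrC.
  apply: (ler_wpM2l muV0); rewrite mulrDl; apply: le_trans (ler_normD _ _) _.
  by apply: lerD (hc w Fw) _; rewrite normrZ ger0_norm.
have cvg0 := iter_cvg0_on_ideal M0 hphi hF r0 r1 phi_r Fz z0.
have := vleZ hVL (ltW mu0) (le_of_iter_cvg0 phiD M0 hphi z0 cvg0).
rewrite /phi scalerA mulfV ?gt_eqF // scale1r /mu scalerDl.
by move/(vleD2r hVL (- (L *: z))); rewrite !addrK.
Qed.

Lemma abs_bounded_of_ideal S L c F :
  {morph S : u v / u + v} -> 0 <= L -> abs_bounded le S L ->
  is_ideal le join F -> order_dense le F ->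
  0 <= c -> (forall z, F z -> `|S z| <= c * `|z|) -> abs_bounded le S c.
Proof.
move=> SD L0 hSL hF hFd c0 hc.
have upper S' : {morph S' : u v / u + v} -> abs_bounded le S' L ->
    (forall z, F z -> `|S' z| <= c * `|z|) -> forall x, le 0 x -> le (S' x) (c *: x).
  move=> SD' hSL' hc' x x0.
  apply: (le_scale_of_gt hVL lattice_norm_archimedean x0) => d cd.
  have d0 : 0 <= d by apply: ltW (le_lt_trans c0 cd).
  apply: (le_scale_of_dense_ideal hVL lattice_norm_archimedean SD' L0 _ hF hFd d0 _ x0).
    by move=> u /hSL' [].
  exact: le_scale_on_ideal SD' L0 hSL' hF c0 hc' cd.
move=> x x0; split; last exact: upper.
apply/(vleNr hVL); apply: (upper (fun x => - S x)) x0.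
- by move=> u v; rewrite SD opprD.
- exact: (abs_boundedN hVL hSL).
- by move=> z /hc; rewrite normrN.
Qed.

End NormedVectorLattice.

Section OperatorNorm.
Variables (R : realType) (E : normedModType R) (T : {linear E -> E}).

Lemma opnorm_on_ubound A C : 0 <= C -> (forall x, A x -> `|T x| <= C * `|x|) ->
  ubound [set `|T x| | x in [set x | A x /\ `|x| <= 1]] C.
Proof. by move=> C0 hC _ [x [Ax x1] <-]; apply: le_trans (hC x Ax) _; rewrite ler_piMr. Qed.

Lemma opnorm_on_ge0 A C : A 0 -> 0 <= C -> (forall x, A x -> `|T x| <= C * `|x|) ->
  0 <= opnorm_on A T.
Proof.
move=> A0 C0 hC; rewrite -[0](normr0 E) -(linear0 T).
apply: ub_le_sup; first by exists C; apply: opnorm_on_ubound.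
by exists 0 => //; split; rewrite ?normr0.
Qed.

Lemma opnorm_on_le A C : A 0 -> 0 <= C -> (forall x, A x -> `|T x| <= C * `|x|) ->
  opnorm_on A T <= C.
Proof.
move=> A0 C0 hC; apply: ge_sup (opnorm_on_ubound C0 hC).
by exists `|T 0|, 0 => //; split; rewrite ?normr0.
Qed.

Lemma le_opnorm_on A C : (forall a x, A x -> A (a *: x)) -> 0 <= C ->
  (forall x, A x -> `|T x| <= C * `|x|) -> forall z, A z -> `|T z| <= opnorm_on A T * `|z|.
Proof.
move=> AZ C0 hC z Az; have [->|zn0] := eqVneq z 0; first by rewrite linear0 !normr0 mulr0.
have z0 : 0 < `|z| by rewrite normr_gt0.
have zV0 : 0 <= `|z|^-1 by rewrite invr_ge0 ltW.
rewrite -ler_pdivrMr // mulrC -[X in X * _](ger0_norm zV0) -normrZ -linearZ.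
apply: ub_le_sup; first by exists C; apply: opnorm_on_ubound.
by exists (`|z|^-1 *: z); split; rewrite ?normrZ ?ger0_norm ?mulVf ?normr_eq0 //; apply: AZ.
Qed.

Lemma opnorm_on_subset A B C : A `<=` B -> A 0 -> 0 <= C ->
  (forall x, B x -> `|T x| <= C * `|x|) -> opnorm_on A T <= opnorm_on B T.
Proof.
move=> AB A0 C0 hC; apply: ge_sup; first by exists `|T 0|, 0 => //; split; rewrite ?normr0.
move=> _ [x [Ax x1] <-]; apply: ub_le_sup; first by exists C; apply: opnorm_on_ubound.
by exists x => //; split => //; apply: AB.
Qed.

End OperatorNorm.

Theorem mainTheorem7 (R : realType) (E : completeNormedModType R)
  (le : E -> E -> Prop) (join : E -> E -> E)
  (hE : banach_lattice le join)
  (F : set E) (hFid : is_ideal le join F) (hFcl : closed F)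
  (hFdense : order_dense le F)
  (T : {linear E -> E}) (hT : in_center le T) :
  opnorm_on F T = opnorm_on setT T.
Proof.
have [hVL hLN] := hE.
have [_ [lam hlam]] := hT.
have [F0 _ FZ _] := hFid.
have L0 := normr_ge0 lam.
have TD : {morph T : u v / u + v} := linearD T.
have hTL : abs_bounded le T `|lam| := abs_boundedW hVL (ler_norm lam) hlam.
have TL : forall x, `|T x| <= `|lam| * `|x| := norm_le_scale hVL hLN TD L0 hTL.
set c := opnorm_on F T.
have c0 : 0 <= c := opnorm_on_ge0 F0 L0 (fun x _ => TL x).
have hc : forall z, F z -> `|T z| <= c * `|z| := le_opnorm_on FZ L0 (fun x _ => TL x).
have hTc := abs_bounded_of_ideal hVL hLN TD L0 hTL hFid hFdense c0 hc.
apply/le_anti/andP; split.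
- by apply: (opnorm_on_subset (subsetT F) F0 L0) => x _; apply: TL.
- by apply: opnorm_on_le => // x _; apply: (norm_le_scale hVL hLN TD c0 hTc).
Qed.
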